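(* Let $O$ be the partial P-matroid USO of a P-matroid extension $\widehat{\mathcal M}$ on $E_{2n}\cup\{q\}$. Then there exists a set $F$ of pairwise vertex-disjoint faces of $Q_n$ such that the set of unoriented half-edges of $O$ (pairs $(v,i)$ with $O(v)_i=0$) is exactly the union over $f\in F$ of the half-edges of $f$ (pairs $(v,i)$ with $v\in f$ and $i$ spanned by $f$). Furthermore, each $f\in F$ is a hypervertex of $O$.
   Context: Oriented matroids are given by circuits $X\in\{-,0,+\}^E$ with support $\underline X$; bases are inclusion-maximal subsets containing no circuit support; for a basis $B$ and $e\notin B$ the fundamental circuit $C(B,e)$ is the unique circuit $X$ with $X_e=+$, $\underline X\subseteq B\cup\{e\}$. $S=\{s_1,\dots,s_n\}$, $T=\{t_1,\dots,t_n\}$, $E_{2n}=S\cup T$, $q\notin E_{2n}$; complementary sets contain no pair $\{s_i,t_i\}$; a circuit is sign-reversing if $X_{s_i}=-X_{t_i}$ whenever $\{s_i,t_i\}\subseteq\underline X$; a P-matroid is an oriented matroid on $E_{2n}$ in which $S$ is a basis and no circuit is sign-reversing; a P-matroid extension is an oriented matroid on $E_{2n}\cup\{q\}$ whose circuits with $X_q=0$ restrict to exactly the circuits of a P-matroid. In a P-matroid extension every complementary $n$-set is a basis. A face of $Q_n$ is a set $\{w\in\{0,1\}^n: w_j=u_j\ \forall j\notin I\}$, spanning the dimensions in $I$. For $v\in\{0,1\}^n$, $B(v)=\{s_i:v_i=0\}\cup\{t_i:v_i=1\}$. The partial P-matroid USO is $O:\{0,1\}^n\to\{-,0,+\}^n$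 with, for $C=C(B(v),q)$ and $e=s_i$ if $v_i=0$, $e=t_i$ if $v_i=1$: $O(v)_i=+$ if $C_e=-$, $-$ if $C_e=+$, $0$ if $C_e=0$. A face $f$ is a hypervertex of $O$ if $O(v)_i=O(w)_i$ for all $v,w\in f$ and all dimensions $i$ not spanned by $f$. *)

From mathcomp Require Import all_boot.
Set Implicit Arguments. Unset Strict Implicit. Unset Printing Implicit Defensive.

(* Signs {-,0,+} encoded as option bool: None = 0, Some true = +, Some false = - *)
Definition sign := option bool.
Definition sPos : sign := Some true.
Definition sNeg : sign := Some false.
Definition sZero : sign := None.
Definition oppS (s : sign) : sign := omap negb s.

Section OM.
Variable E : finType.
Definition signvec := {ffun E -> sign}.
Definition oppv (X : signvec) : signvec := [ffun e => oppS (X e)].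
Definition supp (X : signvec) : {set E} := [set e | X e != sZero].

(* Circuit axioms of an oriented matroid (C0)-(C3), with weak elimination. *)
Definition om_circuits (C : {set signvec}) : Prop :=
  [/\ (forall X, X \in C -> supp X != set0),
      (forall X, X \in C -> oppv X \in C),
      (forall X Y, X \in C -> Y \in C -> supp X \subset supp Y ->
          X = Y \/ X = oppv Y) &
      (forall X Y e, X \in C -> Y \in C -> X != oppv Y ->
          X e = sPos -> Y e = sNeg ->
          exists2 Z, Z \in C &
            Z e = sZero /\
            forall f, (Z f = sPos -> X f = sPos \/ Y f = sPos) /\
                      (Z f = sNeg -> X f = sNeg \/ Y f = sNeg))].

Definition independent (C : {set signvec}) (B : {set E}) : Prop :=
  forall X, X \in C -> ~~ (supp X \subset B).

Definition is_basis (C : {set signvec}) (B : {set E}) : Prop :=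
  independent C B /\
  forall B' : {set E}, B \subset B' -> independent C B' -> B' = B.

(* fundamental circuit C(B,e): the (unique, when B is a basis and e \notin B)
   circuit X with X_e = + and supp X \subset B \cup {e} *)
Definition fund_circuit (C : {set signvec}) (B : {set E}) (e : E)
  : option signvec :=
  [pick X in C | (X e == sPos) && (supp X \subset e |: B)].
End OM.

(* Ground set E_{2n} : (i,false) = s_i, (i,true) = t_i ;
   extended ground set E_{2n} \cup {q} : Some x for x in E_{2n}, None = q *)
Definition E2n (n : nat) := ('I_n * bool)%type.
Definition E2nq (n : nat) := option (E2n n).

Definition Sset (n : nat) : {set E2n n} := [set x | ~~ x.2].

Definition sign_reversing n (X : signvec (E2n n)) : Prop :=
  forall i : 'I_n, X (i, false) != sZero -> X (i, true) != sZero ->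
    X (i, false) = oppS (X (i, true)).

Definition P_matroid n (C : {set signvec (E2n n)}) : Prop :=
  [/\ om_circuits C, is_basis C (Sset n) &
      forall X, X \in C -> ~ sign_reversing X].

Definition restr n (X : signvec (E2nq n)) : signvec (E2n n) :=
  [ffun x => X (Some x)].

Definition P_matroid_ext n (C : {set signvec (E2nq n)}) : Prop :=
  om_circuits C /\
  P_matroid [set restr X | X in C & X None == sZero].

Definition vertex n := {ffun 'I_n -> bool}.

Definition Bv n (v : vertex n) : {set E2nq n} :=
  [set Some (i, v i) | i : 'I_n].

(* partial P-matroid USO ; the default case of [pick] never occurs for a
   P-matroid extension since every complementary n-set is a basis *)
Definition pusO n (C : {set signvec (E2nq n)}) (v : vertex n) (i : 'I_n)
  : sign :=
  match fund_circuit C (Bv v) None with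
  | Some X => oppS (X (Some (i, v i)))
  | None => sZero
  end.

Definition faceset n (u : vertex n) (I : {set 'I_n}) : {set vertex n} :=
  [set w : vertex n | [forall j, (j \notin I) ==> (w j == u j)]].

Definition is_face n (f : {set vertex n}) : Prop :=
  exists u I, f = faceset u I.

Definition dims n (f : {set vertex n}) : {set 'I_n} :=
  [set i | [exists v in f, exists w in f, v i != w i]].

Definition half_edges n (f : {set vertex n}) : {set vertex n * 'I_n} :=
  [set p | (p.1 \in f) && (p.2 \in dims f)].

Definition unoriented n (O : vertex n -> 'I_n -> sign) : {set vertex n * 'I_n} :=
  [set p | O p.1 p.2 == sZero].

Definition hypervertex n (O : vertex n -> 'I_n -> sign) (f : {set vertex n})
  : Prop :=
  forall v w i, v \in f -> w \in f -> i \notin dims f -> O v i = O w i.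

(* For a vertex v of the cube let Z(v) be the set of dimensions i with O(v)_i = 0
   and zero_face v the face through v spanning Z(v).  The whole theorem follows
   from one invariance property: O is constant on zero_face v.  Granting it,
   Z(w) = Z(v) and zero_face w = zero_face v for every w in zero_face v, so the
   faces zero_face v partition the cube, their half-edges are exactly the
   unoriented half-edges, and each is a hypervertex.

   Invariance is proved via fundamental circuits.  Every complementary set B(v)
   is independent (a circuit inside it would be sign-reversing), so C(B(v),q) is
   unique by circuit elimination.  If w lies in zero_face v, the support of
   C(B(v),q) avoids the coordinates where w and v differ, hence C(B(w),q) =
   C(B(v),q), and the coordinates where w differs from v are zero for both.  When
   C(B(v),q) does not exist we need that no C(B(w),q) exists either: q is spanned
   by one complementary basis iff by all, which we show by walking along cube
   edges with a basis-exchange lemma, starting from the basis S. *)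

From mathcomp Require Import all_boot.
Set Implicit Arguments. Unset Strict Implicit. Unset Printing Implicit Defensive.

Lemma in_supp (E : finType) (X : signvec E) x : (x \in supp X) = (X x != sZero).
Proof. by rewrite inE. Qed.

Lemma supp_oppv (E : finType) (X : signvec E) : supp (oppv X) = supp X.
Proof. by apply/setP => x; rewrite !inE ffunE; case: (X x). Qed.

Lemma oppvK (E : finType) (X : signvec E) : oppv (oppv X) = X.
Proof. by apply/ffunP => x; rewrite !ffunE; case: (X x) => // -[]. Qed.

Lemma supp_subU1_zero (E : finType) (X : signvec E) (B : {set E}) e :
  supp X \subset e |: B -> X e = sZero -> supp X \subset B.
Proof.
move=> sX Xe; apply/subsetP => x xX; move: (subsetP sX x xX); rewrite in_setU1.
by case/predU1P => // xe; move: xX; rewrite xe in_supp Xe.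
Qed.

Section OrientedMatroid.
Variables (E : finType) (C : {set signvec E}).

Definition spans (B : {set E}) (e : E) : Prop :=
  exists2 X, X \in C & supp X \subset e |: B /\ X e != sZero.

Lemma indep_circuit_nonzero B e X :
  independent C B -> X \in C -> supp X \subset e |: B -> X e != sZero.
Proof.
by move=> indB XC sX; apply/eqP => Xe; case/negP: (indB X XC); apply: supp_subU1_zero Xe.
Qed.

Lemma spans_of_circuit B e X :
  independent C B -> X \in C -> supp X \subset e |: B -> spans B e.
Proof. by move=> indB XC sX; exists X => //; split; last exact: indep_circuit_nonzero sX. Qed.

Lemma fund_circuit_spec B e X :
  fund_circuit C B e = Some X -> [/\ X \in C, X e = sPos & supp X \subset e |: B].
Proof. by rewrite /fund_circuit; case: pickP => // Y /and3P[YC /eqP Ye sY] [<-]. Qed.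

Lemma spans_of_fund_circuit B e X : fund_circuit C B e = Some X -> spans B e.
Proof. by case/fund_circuit_spec => XC Xe sX; exists X => //; rewrite Xe. Qed.

Hypothesis HC : om_circuits C.

Lemma circuit_rescale X a (s : bool) :
  X \in C -> X a != sZero -> exists2 X', X' \in C & X' a = Some s /\ supp X' = supp X.
Proof.
case: HC => _ Hopp _ _ XC; case Xa: (X a) => [c|] // _.
have [<-|ncs] := eqVneq c s; first by exists X.
exists (oppv X); first exact: Hopp.
by rewrite ffunE Xa supp_oppv; case: c s ncs {Xa} => -[].
Qed.

Lemma circuit_elimination X Y e :
  X \in C -> Y \in C -> X != oppv Y -> X e = sPos -> Y e = sNeg ->
  exists2 Z, Z \in C & Z e = sZero /\ supp Z \subset supp X :|: supp Y.
Proof.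
case: HC => _ _ _ Helim XC YC XY Xe Ye.
have [Z ZC [Ze HZ]] := Helim X Y e XC YC XY Xe Ye.
exists Z => //; split => //; apply/subsetP => f; rewrite in_setU !in_supp.
case Zf: (Z f) => [c|] // _; have [HZp HZn] := HZ f.
by case: c Zf => Zf; [case: (HZp Zf) | case: (HZn Zf)] => ->; rewrite ?orbT.
Qed.

(* Over an independent B, the circuit positive at e inside e |: B is unique:
   otherwise eliminating e from X and -Y yields a circuit inside B. *)
Lemma fund_circuit_unique B e X Y :
  independent C B -> X \in C -> Y \in C -> X e = sPos -> Y e = sPos ->
  supp X \subset e |: B -> supp Y \subset e |: B -> X = Y.
Proof.
move=> indB XC YC Xe Ye sX sY; apply/eqP/negPn/negP => XY.
case: (HC) => _ Hopp _ _.
have XY' : X != oppv (oppv Y) by rewrite oppvK.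
have Ye' : oppv Y e = sNeg by rewrite ffunE Ye.
have [Z ZC [Ze sZ]] := circuit_elimination XC (Hopp _ YC) XY' Xe Ye'.
case/negP: (indB Z ZC); apply: supp_subU1_zero Ze.
by rewrite (subset_trans sZ) // subUset sX supp_oppv sY.
Qed.

Lemma fund_circuit_of_spans B e : spans B e -> exists X, fund_circuit C B e = Some X.
Proof.
case=> X XC [sX Xe]; have [X' X'C [X'e sX']] := circuit_rescale true XC Xe.
rewrite /fund_circuit; case: pickP => [Y _|none]; first by exists Y.
by move: (none X'); rewrite X'C X'e sX' sX.
Qed.

(* Let Y be a circuit in b |: B using a, and B'
   independent with B :\ a in B' and b in B'.  Every e spanned by B and not
   used by Y is spanned by B'; if the witness X uses a, eliminate a from X, Y. *)
Lemma spans_exchange B B' a b e X Y :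
  independent C B' -> B :\ a \subset B' -> b \in B' ->
  Y \in C -> supp Y \subset b |: B -> Y a != sZero -> Y e = sZero ->
  X \in C -> supp X \subset e |: B -> X e != sZero -> spans B' e.
Proof.
move=> indB' sBB' bB' YC sY Ya Ye XC sX Xe.
have sB : e |: B :\ a \subset e |: B' by apply: setUS.
have [Xa|Xa] := eqVneq (X a) sZero.
  apply: (spans_of_circuit indB' XC); apply: subset_trans sB.
  apply/subsetP => x xX; have xa : x != a by apply: contraTneq xX => ->; rewrite in_supp Xa.
  by move: (subsetP sX x xX); rewrite !inE xa.
have [X' X'C [X'a sX']] := circuit_rescale true XC Xa.
have [Y' Y'C [Y'a sY']] := circuit_rescale false YC Ya.
have X'Y' : X' != oppv Y'.
  apply: contra_neq Xe => X'Y'; apply/eqP/negPn.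
  by rewrite -in_supp -sX' X'Y' supp_oppv sY' in_supp Ye.
have [Z ZC [Za sZ]] := circuit_elimination X'C Y'C X'Y' X'a Y'a.
apply: (spans_of_circuit indB' ZC); apply/subsetP => x xZ.
have xa : x != a by apply: contraTneq xZ => ->; rewrite in_supp Za.
have xB' : x \in B -> x \in B' by move=> xB; apply: (subsetP sBB'); rewrite !inE xa.
move: (subsetP sZ x xZ); rewrite sX' sY' in_setU => /orP[/(subsetP sX)|/(subsetP sY)];
  rewrite !inE => /orP[/eqP->|/xB'->]; rewrite ?eqxx ?bB' ?orbT //.
Qed.

End OrientedMatroid.

Definition flip n (v : vertex n) (i : 'I_n) : vertex n :=
  [ffun j => if j == i then ~~ v i else v j].

(* The all-zero vertex, whose complementary set is S. *)
Definition v0 n : vertex n := [ffun _ => false].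

Lemma flip_eq n (v : vertex n) i : flip v i i = ~~ v i.
Proof. by rewrite ffunE eqxx. Qed.

Lemma flip_neq n (v : vertex n) i j : j != i -> flip v i j = v j.
Proof. by rewrite ffunE => /negbTE ->. Qed.

Lemma flipK n (v : vertex n) i : flip (flip v i) i = v.
Proof. by apply/ffunP => j; rewrite !ffunE eqxx; case: eqP => // ->; rewrite negbK. Qed.

Lemma cube_ind n (P : vertex n -> Prop) :
  P (v0 n) -> (forall v i, P v -> P (flip v i)) -> forall v, P v.
Proof.
move=> P0 Pflip.
suff weight_ind k (v : vertex n) : #|[set j | v j]| = k -> P v by move=> v; exact: weight_ind.
elim: k v => [|k IH] v hv.
  suff -> : v = v0 n by [].
  apply/ffunP => j; rewrite ffunE; apply/negbTE/negP => vj.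
  by move/cards0_eq/setP/(_ j): hv; rewrite !inE vj.
have /set0Pn[j] : [set j | v j] != set0 by rewrite -cards_eq0 hv.
rewrite inE => vj; rewrite -(flipK v j); apply/Pflip/IH.
move: hv; rewrite (cardsD1 j) inE vj add1n => -[<-].
by apply: eq_card => x; rewrite !inE ffunE; case: eqP => [->|]; rewrite ?vj.
Qed.

Lemma faceset_self n (u : vertex n) I : u \in faceset u I.
Proof. by rewrite inE; apply/forallP => j; apply/implyP. Qed.

Lemma faceset_out n (u w : vertex n) I j :
  w \in faceset u I -> j \notin I -> w j = u j.
Proof. by rewrite inE => /forallP /(_ j) /implyP wu /wu /eqP. Qed.

Lemma faceset_move n (u w : vertex n) I :
  w \in faceset u I -> faceset w I = faceset u I.
Proof.
move=> wf; apply/setP => x; rewrite !inE.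
by apply: eq_forallb => j; apply: implyb_id2l => jI; rewrite (faceset_out wf jI).
Qed.

Lemma dims_faceset n (u : vertex n) I : dims (faceset u I) = I.
Proof.
apply/setP => i; rewrite inE; apply/existsP/idP => [[v /andP[vf /existsP[w /andP[wf]]]]|iI].
  by apply: contraNT => iI; rewrite (faceset_out vf iI) (faceset_out wf iI).
exists u; rewrite faceset_self; apply/existsP; exists (flip u i).
rewrite flip_eq inE; apply/andP; split; last by case: (u i).
by apply/forallP => j; apply/implyP => jI; rewrite flip_neq //; apply: contraNneq jI => ->.
Qed.

Lemma mem_Bv n (v : vertex n) i b : (Some (i, b) \in Bv v) = (b == v i).
Proof. by apply/imsetP/eqP => [[j _ [-> ->]] // | ->]; exists i. Qed.

Lemma None_Bv n (v : vertex n) : (None \in Bv v) = false.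
Proof. by apply/imsetP => -[]. Qed.

Lemma Bv_flip n (v : vertex n) i :
  Bv (flip v i) = Some (i, ~~ v i) |: (Bv v :\ Some (i, v i)).
Proof.
apply/setP => -[[j b]|]; rewrite !inE ?None_Bv // !mem_Bv !(inj_eq Some_inj) !xpair_eqE.
have [->|ji] := eqVneq j i; last by rewrite flip_neq.
by rewrite flip_eq; case: b; case: (v i).
Qed.

Section PMatroidExtension.
Variables (n : nat) (C : {set signvec (E2nq n)}).
Hypothesis HP : P_matroid_ext C.

Let HC : om_circuits C := proj1 HP.

(* Every B(v) is independent: a circuit inside B(v) avoids q, so it is a
   circuit of the P-matroid, and it contains no complementary pair, so it would
   be sign-reversing. *)
Lemma indep_Bv v : independent C (Bv v).
Proof.
case: HP => _ [_ _ noSR] X XC; apply/negP => sX.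
have Xq : X None = sZero.
  by apply/eqP/negPn; rewrite -in_supp; apply: contraFN (None_Bv v); apply: (subsetP sX).
apply: (noSR (restr X)); first by apply/imsetP; exists X; rewrite // inE XC Xq.
move=> i; rewrite !ffunE -!in_supp => /(subsetP sX) + /(subsetP sX).
by rewrite !mem_Bv => /eqP <- /eqP.
Qed.

(* B(v) spans the partner of each of its elements, hence all of E_2n. *)
Definition spans_ground (v : vertex n) : Prop :=
  forall i, spans C (Bv v) (Some (i, ~~ v i)).

(* B(0) = S spans every t_i: otherwise S + t_i would be independent in the
   P-matroid, contradicting the maximality of the basis S. *)
Lemma spans_ground_v0 : spans_ground (v0 n).
Proof.
move=> i; case: HP => _ [_ [_ maxS] _].
set B' := (i, true) |: Sset n.
have [/existsP[X' /andP[XM sX']] | noX] :=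
  boolP [exists X in [set restr X | X in C & X None == sZero], supp X \subset B'].
  case/imsetP: XM sX' => X; rewrite inE => /andP[XC /eqP Xq] -> sX.
  apply: (spans_of_circuit (indep_Bv _) XC); apply/subsetP => -[y|] yX; last first.
    by rewrite in_supp Xq in yX.
  have /(subsetP sX) : y \in supp (restr X) by rewrite in_supp ffunE -in_supp.
  case: y {yX} => j b; rewrite !inE mem_Bv !(inj_eq Some_inj) !xpair_eqE !ffunE /=.
  by case: b; rewrite ?orbT.
have indB' : independent [set restr X | X in C & X None == sZero] B'.
  by move=> Y YM; apply: contraNN noX => sY; apply/existsP; exists Y; rewrite YM.
by move/setP/(_ (i, true)): (maxS B' (subsetUr _ _) indB'); rewrite !inE eqxx.
Qed.

Lemma spans_flip v i e :
  spans_ground v -> e \notin Bv v -> e != Some (i, ~~ v i) ->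
  spans C (Bv v) e -> spans C (Bv (flip v i)) e.
Proof.
move=> Gv eB eb [X XC [sX Xe]]; have [Y YC [sY _]] := Gv i.
have sBflip : Bv v :\ Some (i, v i) \subset Bv (flip v i) by rewrite Bv_flip subsetUr.
have bflip : Some (i, ~~ v i) \in Bv (flip v i) by rewrite Bv_flip setU11.
have Ya : Y (Some (i, v i)) != sZero.
  apply/eqP => Ya; case/negP: (indep_Bv (flip v i) YC); apply/subsetP => x xY.
  have xa : x != Some (i, v i) by apply: contraTneq xY => ->; rewrite in_supp Ya.
  by move: (subsetP sY x xY); rewrite Bv_flip !inE xa.
have Ye : Y e = sZero.
  apply/eqP/negPn; rewrite -in_supp; apply/negP => /(subsetP sY).
  by rewrite in_setU1 (negbTE eb) (negbTE eB).
exact: (spans_exchange HC (indep_Bv (flip v i)) sBflip bflip YC sY Ya Ye XC sX Xe).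
Qed.

Lemma spans_ground_flip v i : spans_ground v -> spans_ground (flip v i).
Proof.
move=> Gv j; have [->|ji] := eqVneq j i.
  have [Y YC [sY _]] := Gv i; rewrite flip_eq negbK.
  apply: (spans_of_circuit (indep_Bv _) YC); apply: (subset_trans sY).
  apply/subsetP => x; rewrite Bv_flip !inE.
  by case: (eqVneq x (Some (i, v i))) => [->|_] /=.
rewrite flip_neq //; apply: spans_flip => //.
- by rewrite mem_Bv; case: (v j).
- by rewrite (inj_eq Some_inj) xpair_eqE (negbTE ji).
Qed.

Lemma spans_ground_all v : spans_ground v.
Proof. exact: cube_ind spans_ground_v0 spans_ground_flip v. Qed.

Lemma spans_q_flip v i : spans C (Bv v) None -> spans C (Bv (flip v i)) None.
Proof. by apply: spans_flip; rewrite ?None_Bv //; apply: spans_ground_all. Qed.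

Lemma spans_q_invariant v w : spans C (Bv v) None -> spans C (Bv w) None.
Proof.
suff q_v0 u : spans C (Bv u) None <-> spans C (Bv (v0 n)) None by move=> /q_v0 ?; apply/q_v0.
move: u; apply: cube_ind => // u i IH.
split => [|/IH/spans_q_flip //].
by move/(spans_q_flip i); rewrite flipK => /IH.
Qed.

End PMatroidExtension.

Definition zero_dims n (C : {set signvec (E2nq n)}) (v : vertex n) : {set 'I_n} :=
  [set i | pusO C v i == sZero].

Definition zero_face n (C : {set signvec (E2nq n)}) (v : vertex n) : {set vertex n} :=
  faceset v (zero_dims C v).

Section ZeroFaces.
Variables (n : nat) (C : {set signvec (E2nq n)}).
Hypothesis HP : P_matroid_ext C.

Let HC : om_circuits C := proj1 HP.

(* C(B(w),q) = C(B(v),q) on the zero face of v: the support of C(B(v),q)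
   only meets dimensions where O(v) is nonzero, where w agrees with v; and if
   C(B(v),q) does not exist, q is spanned by no complementary set. *)
Lemma fund_circuit_zero_face v w :
  w \in zero_face C v -> fund_circuit C (Bv w) None = fund_circuit C (Bv v) None.
Proof.
move=> wf; case ev: (fund_circuit C (Bv v) None) => [X|]; last first.
  case ew: (fund_circuit C (Bv w) None) => [Y|] //.
  have := spans_q_invariant HP v (spans_of_fund_circuit ew).
  by case/(fund_circuit_of_spans HC) => X; rewrite ev.
have [XC Xq sX] := fund_circuit_spec ev.
have sXw : supp X \subset None |: Bv w.
  apply/subsetP => x xX; move: (subsetP sX x xX).
  rewrite !in_setU1 => /orP[->//|/imsetP[j _ xj]].
  have jI : j \notin zero_dims C v.
    by rewrite inE /pusO ev -xj; move: xX; rewrite in_supp; case: (X x).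
  by rewrite xj mem_Bv (faceset_out wf jI) eqxx orbT.
have [Y ew] := fund_circuit_of_spans HC (spans_of_circuit (indep_Bv HP w) XC sXw).
have [YC Yq sY] := fund_circuit_spec ew.
by rewrite ew (fund_circuit_unique HC (indep_Bv HP w) YC XC Yq Xq sY sXw).
Qed.

(* O(w) = O(v) on the zero face of v: where w differs from v, both signs are
   zero, because the element of B(w) there lies outside q |: B(v). *)
Lemma pusO_zero_face v w i : w \in zero_face C v -> pusO C w i = pusO C v i.
Proof.
move=> wf; rewrite /pusO (fund_circuit_zero_face wf).
case ev: (fund_circuit C (Bv v) None) => [X|] //.
have [->//|wv] := eqVneq (w i) (v i).
have : i \in zero_dims C v by apply: contraR wv => /(faceset_out wf) ->.
rewrite inE /pusO ev => /eqP ->.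
have [_ _ sX] := fund_circuit_spec ev.
suff -> : X (Some (i, w i)) = sZero by [].
apply/eqP/negPn; rewrite -in_supp; apply/negP => /(subsetP sX).
by rewrite in_setU1 mem_Bv (negbTE wv).
Qed.

Lemma zero_face_move v w : w \in zero_face C v -> zero_face C w = zero_face C v.
Proof.
move=> wf; have zdims : zero_dims C w = zero_dims C v.
  by apply/setP => i; rewrite !inE (pusO_zero_face i wf).
by rewrite /zero_face zdims; apply: faceset_move.
Qed.

End ZeroFaces.

Theorem mainTheorem4 (n : nat) (C : {set signvec (E2nq n)}) :
  P_matroid_ext C ->
  exists F : {set {set vertex n}},
    [/\ (forall f, f \in F -> is_face f),
        (forall f g, f \in F -> g \in F -> f != g -> [disjoint f & g]),
        unoriented (pusO C) = \bigcup_(f in F) half_edges f &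
        (forall f, f \in F -> hypervertex (pusO C) f)].
Proof.
move=> HP; exists [set zero_face C v | v : vertex n]; split.
- by move=> f /imsetP[v _ ->]; exists v, (zero_dims C v).
- move=> f g /imsetP[v _ ->] /imsetP[u _ ->]; apply: contraR.
  case/pred0Pn => x /andP[xv xu].
  by rewrite -(zero_face_move HP xv) -(zero_face_move HP xu).
- apply/setP => -[v i]; rewrite inE /=; apply/idP/bigcupP => [vi0|[_ /imsetP[u _ ->]]].
    exists (zero_face C v); first exact: imset_f.
    by rewrite inE /= dims_faceset faceset_self inE.
  rewrite inE /= dims_faceset => /andP[vf iI].
  by move: iI; rewrite inE -(pusO_zero_face HP i vf).
- move=> f /imsetP[u _ ->] v w i vf wf _.
  by rewrite (pusO_zero_face HP i vf) (pusO_zero_face HP i wf).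
Qed.
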